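(* Let $P$ be a Young diagram contained in a $\delta\times\delta$ square and $C_P\subset Gr(\delta,V)$ the corresponding Schubert cell. Then $C_P\cap\overline{JF}\neq\emptyset$ if and only if $P$ is simultaneously an $m$-core and an $n$-core. In that case all $W\in C_P$ have the same set $\Delta(W)=:\Delta_P$, and $C_P\cap\overline{JF}=\{W\in\overline{JF}:\Delta(W)=\Delta_P\}$, which is a cell of Piontkowski's affine cell decomposition of $\overline{JF}$.
   Context: Let $m,n$ be coprime positive integers, $\delta=\frac{(m-1)(n-1)}2$, $R=\mathbb{C}[[t^n,t^m]]\subset\mathbb{C}[[t]]$, and $V=\mathbb{C}[[t]]/t^{2\delta}\mathbb{C}[[t]]$, with filtration $V=V_{2\delta}\supset V_{2\delta-1}\supset\dots\supset V_0=0$, $V_i=t^{2\delta-i}V$. The Jacobi factor $\overline{JF}\subset Gr(\delta,V)$ is the subvariety of $\delta$-dimensional subspaces $W\subset V$ invariant under multiplication by $R$ (equivalently, $R$-submodules $M\subset\mathbb{C}[[t]]$ containing $t^{2\delta}\mathbb{C}[[t]]$ of codimension $\delta$). For a Young diagram $P$ in a $\delta\times\delta$ square with rows $p_1\le\dots\le p_\delta$, the Schubert cell $C_P$ is the set of $W\in Gr(\delta,V)$ with $\dim(W\cap V_i)=\#\{j: p_j+j\le i\}$ for all $i$. For $W\subset V$ set $\Delta(W)=\{d\in\mathbb{Z}: \exists p\in W,\ p\in V_{2\delta-d}\setminus V_{2\delta-d-1}\}\cup[2\delta,\infty)$ (the set of $t$-adic orders of elements of $W$, together with all integers $\ge2\delta$).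 Piontkowski's cell decomposition of $\overline{JF}$ has cells $\{W\in\overline{JF}:\Delta(W)=\Delta\}$, each an affine space. A Young diagram is a $p$-core if none of its boxes has hook length equal to $p$. *)

(* The field of complex numbers is modelled as
   [complex R] (= R[i]) for an arbitrary [R : realType]; since every
   realType is a complete archimedean ordered field, R is (isomorphic to)
   the real numbers and R[i] is (isomorphic to) C. *)
From HB Require Import structures.
From mathcomp Require Import all_boot all_order all_algebra.
From mathcomp Require Import reals.
From mathcomp Require Import complex.
Set Implicit Arguments. Unset Strict Implicit. Unset Printing Implicit Defensive.
Import GRing.Theory Num.Theory.
Local Open Scope ring_scope.

Section JacobiFactor.
Variable K : fieldType.

Definition jdelta (m n : nat) : nat := ((m.-1 * n.-1) %/ 2)%N.

(* V = C[[t]]/t^N C[[t]] is modelled as row vectors of length N: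
   coordinate k is the coefficient of t^k. *)
Definition coefV (N : nat) (w : 'rV[K]_N) (j : nat) : K :=
  match ltnP j N with
  | LtnNotGeq h => w 0 (Ordinal h)
  | _ => 0
  end.

(* elements of R = C[[t^n, t^m]]: power series (coefficient sequences)
   supported on the semigroup generated by n and m *)
Definition in_R (m n : nat) (f : nat -> K) : Prop :=
  forall k : nat, f k <> 0 -> exists a b : nat, k = (a * n + b * m)%N.

Definition actV (N : nat) (f : nat -> K) (w : 'rV[K]_N) : 'rV[K]_N :=
  \row_(k < N) \sum_(i < k.+1) f i * coefV w (k - i).

Definition tpow (N : nat) (k : 'I_N) : 'rV[K]_N := delta_mx 0 k.

(* the filtration V_i = t^(N-i) V  (here N = 2 delta) *)
Definition Vfilt (N i : nat) : {vspace 'rV[K]_N} :=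
  <<[seq tpow k | k : 'I_N <- enum 'I_N & (N - i <= k)%N]>>%VS.

Definition in_JF (m n : nat) (W : {vspace 'rV[K]_(2 * jdelta m n)}) : Prop :=
  \dim W = jdelta m n /\
  forall f : nat -> K, in_R m n f ->
    forall w, w \in W -> actV f w \in W.

(* Young diagrams in a d x d square, rows p_1 <= ... <= p_d
   (p_j is [nth 0 p j.-1]) *)
Definition young_in_square (d : nat) (p : seq nat) : Prop :=
  size p = d /\ sorted leq p /\ all (fun x => x <= d)%N p.

Definition in_schubert (d : nat) (p : seq nat) (W : {vspace 'rV[K]_(2 * d)}) : Prop :=
  \dim W = d /\
  forall i : nat, (i <= 2 * d)%N ->
    \dim (W :&: Vfilt (2 * d) i)%VS =
      #|[set j : 'I_d | (nth 0 p j + j.+1 <= i)%N]|.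

(* hook length of box in row j (0-based index into p), column c
   (1 <= c <= p_j): arm + leg + 1, where the leg counts the rows
   of length >= c lying beyond row j (rows are listed increasingly). *)
Definition hook (p : seq nat) (j c : nat) : nat :=
  ((nth 0 p j - c) + count (fun x => c <= x)%N (take j p) + 1)%N.

Definition is_core (q : nat) (p : seq nat) : Prop :=
  forall j c : nat, (j < size p)%N -> (1 <= c <= nth 0 p j)%N -> hook p j c <> q.

(* Delta(W) as a subset of the integers (all its elements are >= 0, so
   we use nat): orders of elements of W, together with [2 delta, oo). *)
Definition DeltaW (N : nat) (W : {vspace 'rV[K]_N}) (d : nat) : Prop :=
  (N <= d)%N \/
  ((d < N)%N /\ exists w, [/\ w \in W, w \in Vfilt N (N - d) &
                               w \notin Vfilt N (N - d - 1)]).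

Definition piontkowski_cell (m n : nat) (D : nat -> Prop)
    (W : {vspace 'rV[K]_(2 * jdelta m n)}) : Prop :=
  in_JF W /\ (forall d, DeltaW W d <-> D d).

End JacobiFactor.

From mathcomp Require Import all_boot all_order all_algebra.
From mathcomp Require Import reals complex zify.
Import GRing.Theory.
Set Implicit Arguments. Unset Strict Implicit. Unset Printing Implicit Defensive.

(* Write e_j = p_j + j (rows counted from 0) for the beta-numbers of P.  A
   subspace W lies in C_P exactly when the indices i at which
   dim (W :&: V_i) jumps are the e_j, i.e. when the t-adic orders of the
   elements of W are exactly the 2 delta - 1 - e_j.  Multiplication by t^q
   turns an element of order 2 delta - 1 - i into one of order
   2 delta - 1 - (i - q), so for an R-invariant W the beta-numbers are closed
   under subtracting m and n.  A box of P of hook length q is the same thing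
   as a beta-number e with e - q >= 0 not a beta-number, so this closure says
   that P is an m- and an n-core.  Conversely, for such P the span of the
   monomials t^(2 delta - 1 - e_j) is R-invariant and lies in C_P.  Finally
   Delta(W) is read off from the jump indices, so it is constant on C_P and
   singles out C_P inside the Jacobi factor. *)

Definition betas (p : seq nat) : seq nat := [seq nth 0 p j + j | j <- iota 0 (size p)].

Lemma mem_betas p x :
  reflect (exists2 j, j < size p & nth 0 p j + j = x) (x \in betas p).
Proof.
apply: (iffP mapP) => [[j] | [j j_lt <-]].
  by rewrite mem_iota => j_lt ->; exists j.
by exists j; rewrite ?mem_iota.
Qed.

Lemma size_betas p : size (betas p) = size p.
Proof. by rewrite size_map size_iota. Qed.

Lemma nth_ltn_count (p : seq nat) c k : sorted leq p -> k < size p ->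
  (nth 0 p k < c) = (k < count (fun x => x < c) p).
Proof.
elim: p k => [|x p IH] k //= /[dup] /path_sorted p_sorted.
rewrite (path_sortedE leq_trans) => /andP [/allP x_le _].
have count0 : c <= x -> count (fun y => y < c) p = 0.
  by move=> cx; apply/eqP; rewrite -leqn0 leqNgt -has_count; apply/hasP => -[y /x_le]; lia.
case: k => [|k] /= k_lt; first by case: ltnP => // /count0 ->.
rewrite IH //; have [//|cx] := ltnP x c.
by rewrite count0.
Qed.

Section BetaNumbers.
Variable p : seq nat.
Hypothesis p_sorted : sorted leq p.

Lemma nth_sorted_leq j k : j <= k -> k < size p -> nth 0 p j <= nth 0 p k.
Proof.
move=> jk k_lt; apply: (sorted_leq_nth leq_trans leqnn) => //.
by rewrite inE // (leq_ltn_trans jk).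
Qed.

Lemma hook_sortedE j c : j < size p -> c <= nth 0 p j ->
  hook p j c = (nth 0 p j + j).+1 - (c + count (fun x => x < c) p).
Proof.
move=> j_lt c_le; set s := count _ p.
have s_le : s <= j by rewrite leqNgt -nth_ltn_count // -leqNgt.
have drop0 : count (fun x => x < c) (drop j p) = 0.
  apply/eqP; rewrite -leqn0 leqNgt -has_count; apply/(has_nthP 0) => -[l].
  rewrite size_drop nth_drop => l_lt; rewrite nth_ltn_count //; lia.
have take_s : count (fun x => x < c) (take j p) = s.
  by rewrite /s -[in RHS](cat_take_drop j p) count_cat drop0 addn0.
have leg : count (fun x => c <= x) (take j p) = j - s.
  rewrite -[j in RHS](size_takel (ltnW j_lt)) -(count_predC (fun x => x < c)) take_s addKn.
  by apply: eq_count => x; rewrite /= -leqNgt.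
rewrite /hook leg; lia.
Qed.

Lemma hook_betas_gap j c : j < size p -> 0 < c <= nth 0 p j ->
  hook p j c <= nth 0 p j + j /\ nth 0 p j + j - hook p j c \notin betas p.
Proof.
move=> j_lt /andP [c_gt0 c_le]; rewrite hook_sortedE //.
have s_le : count (fun x => x < c) p <= j by rewrite leqNgt -nth_ltn_count // -leqNgt.
split; first lia.
apply/mem_betas => -[k k_lt E]; have := nth_ltn_count c p_sorted k_lt.
case: (ltnP (nth 0 p k) c); case: (ltnP k (count _ p)) => //; lia.
Qed.

Lemma betas_gap_hook v j : j < size p -> v < nth 0 p j + j -> v \notin betas p ->
  exists2 c, 0 < c <= nth 0 p j & hook p j c = nth 0 p j + j - v.
Proof.
move=> j_lt v_lt v_gap.
(* the box is (j, v - s + 1), where row s is the first whose beta-number exceeds v *)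
have [s v_lt_s s_min] := ex_minnP (ex_intro (fun k => v < nth 0 p k + k) j v_lt).
have s_le_j : s <= j := s_min j v_lt.
have below k : k < s -> nth 0 p k + k < v.
  move=> k_lt_s; rewrite ltn_neqAle leqNgt; apply/andP; split.
    by apply: contraNneq v_gap => <-; apply/mem_betas; exists k => //; lia.
  by apply/negP => /s_min; lia.
have s_le_v : s <= v by case: s {v_lt_s s_min s_le_j} below => // s /(_ s); lia.
pose c := v - s + 1.
have short k : k < s -> nth 0 p k < c.
  move=> k_lt_s; have := below s.-1; have := @nth_sorted_leq k s.-1; lia.
have long k : s <= k -> k < size p -> c <= nth 0 p k.
  by move=> s_le k_lt; have := nth_sorted_leq s_le k_lt; lia.
have count_c : count (fun x => x < c) p = s.
  have s_lt : s < size p by lia.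
  apply/eqP; rewrite eqn_leq; apply/andP; split; rewrite leqNgt; apply/negP => lt.
    by have := long s (leqnn s) s_lt; rewrite leqNgt nth_ltn_count // lt.
  have := short _ lt; rewrite nth_ltn_count ?ltnn //; lia.
exists c; first by have := long j s_le_j j_lt; lia.
rewrite hook_sortedE ?count_c //; [lia | exact: long].
Qed.

Lemma coreP q : 0 < q ->
  is_core q p <-> {in betas p, forall x, q <= x -> x - q \in betas p}.
Proof.
move=> q_gt0; split=> [core _ /mem_betas [j j_lt <-] q_le | closed j c j_lt c_box].
  apply/negPn/negP => gap; have [|c c_box] := betas_gap_hook j_lt _ gap; first lia.
  by move=> hook_E; apply: (core j c j_lt c_box); lia.
have [hook_le /negP gap] := hook_betas_gap j_lt c_box.
move=> hook_q; apply: gap; rewrite hook_q; apply: closed; last by rewrite -hook_q.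
by apply/mem_betas; exists j.
Qed.

Lemma betas_uniq : uniq (betas p).
Proof.
rewrite map_inj_in_uniq ?iota_uniq // => j k.
rewrite !mem_iota !add0n => /andP [_ j_lt] /andP [_ k_lt].
wlog jk : j k j_lt k_lt / j <= k => [sym|].
  by case: (leqP j k) => [|/ltnW] jk E; [|apply/esym]; apply: sym.
by have := nth_sorted_leq jk k_lt; lia.
Qed.
End BetaNumbers.

Lemma betas_ltn d p : young_in_square d p -> {in betas p, forall x, x < 2 * d}.
Proof.
move=> [size_p [_ /allP p_le]] _ /mem_betas [j j_lt <-].
have /= := p_le _ (mem_nth 0 j_lt); rewrite size_p in j_lt; lia.
Qed.

Lemma subn_closed_semigroup (P : pred nat) m n :
  (forall x, P x -> m <= x -> P (x - m)) -> (forall x, P x -> n <= x -> P (x - n)) ->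
  forall a b x, P x -> a * n + b * m <= x -> P (x - (a * n + b * m)).
Proof.
move=> closed_m closed_n; elim=> [|a IHa] b x.
  elim: b x => [|b IHb] x Px; rewrite ?subn0 // mulSn add0n subnDA => le.
  by apply: IHb; [apply: closed_m | ]; lia.
by rewrite mulSn -addnA subnDA => Px le; apply: IHa; [apply: closed_n | ]; lia.
Qed.

Lemma card_schubert d p i : size p = d ->
  #|[set j : 'I_d | nth 0 p j + j.+1 <= i]| = count (fun x => x < i) (betas p).
Proof.
move=> <-; rewrite -sum1dep_card.
transitivity (\sum_(0 <= j < size p | nth 0 p j + j.+1 <= i) 1); first by rewrite big_mkord.
rewrite sum1_count count_map /index_iota subn0.
by apply: eq_count => j /=; rewrite addnS.
Qed.

Lemma sum_mem_uniq (s : seq nat) i : uniq s ->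
  \sum_(0 <= k < i) (k \in s) = count (fun x => x < i) s.
Proof.
move=> s_uniq; elim: i => [|i IH]; first by rewrite big_geq ?count_pred0.
rewrite big_nat_recr //= IH -(count_uniq_mem i s_uniq) -count_predUI.
rewrite [X in _ + X](@eq_count _ _ pred0) ?count_pred0 ?addn0 => [|x /=]; last by lia.
by apply: eq_count => x /=; lia.
Qed.

Lemma eq_partial_sums N (f g : nat -> bool) :
  (forall i, i <= N -> \sum_(0 <= k < i) f k = \sum_(0 <= k < i) g k) <->
  (forall i, i < N -> f i = g i).
Proof.
split=> [eq_sums i i_lt | eq_fg i i_le].
  have := eq_sums i.+1 i_lt; rewrite !big_nat_recr //= eq_sums ?(ltnW i_lt) //.
  by move/addnI; case: (f i); case: (g i).
by apply: eq_big_nat => k /andP [_ k_lt]; rewrite eq_fg // (leq_trans k_lt i_le).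
Qed.

Local Open Scope ring_scope.

Lemma memv_span_ind (K : fieldType) (vT : vectType K) (P : vT -> Prop) (X : seq vT) :
  P 0 -> (forall a u v, P u -> P v -> P (a *: u + v)) -> {in X, forall x, P x} ->
  forall w, w \in <<X>>%VS -> P w.
Proof.
move=> P0 P_lin; elim: X => [|x X IH] P_X w.
  by rewrite span_nil memv0 => /eqP ->.
rewrite span_cons => /memv_addP [_ /vlineP [a ->] [v v_X ->]].
apply: P_lin; first by apply: P_X; rewrite mem_head.
by apply: IH => // y y_X; apply: P_X; rewrite inE y_X orbT.
Qed.

Lemma dimv_capS_sub (K : fieldType) (vT : vectType K) (W A B : {vspace vT}) :
  (B <= A)%VS -> (\dim (W :&: A) + \dim B <= \dim (W :&: B) + \dim A)%N.
Proof.
move=> BA; rewrite -dimv_sum_cap -capvA (capv_idPr BA) addnC leq_add2l.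
by rewrite dimvS // subv_add capvSr.
Qed.

Section Filtration.
Variables (K : fieldType) (N : nat).
Implicit Types (w : 'rV[K]_N) (W : {vspace 'rV[K]_N}) (S : pred nat).

Definition monomial_span S : {vspace 'rV[K]_N} :=
  <<[seq tpow K k | k : 'I_N <- enum 'I_N & S k]>>%VS.

Lemma tpowE (k l : 'I_N) : tpow K k 0 l = (l == k)%:R.
Proof. by rewrite mxE eqxx. Qed.

Lemma monomial_spanP S w :
  reflect (forall k : 'I_N, ~~ S k -> w 0 k = 0) (w \in monomial_span S).
Proof.
apply: (iffP idP) => [|w_supp].
  move/(memv_span_ind (P := fun w => forall k : 'I_N, ~~ S k -> w 0 k = 0)).
  apply=> [k _|a u v u_supp v_supp k Sk|x /mapP [k]].
  - by rewrite mxE.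
  - by rewrite !mxE u_supp // v_supp // mulr0 addr0.
  rewrite mem_filter => /andP [Sk _] -> l Sl; rewrite tpowE.
  by case: eqP Sl => [->|]; rewrite ?Sk.
rewrite (row_sum_delta w); apply: memv_suml => k _.
have [Sk | Sk] := boolP (S k); last by rewrite w_supp // scale0r mem0v.
by apply/memvZ/memv_span/map_f; rewrite mem_filter Sk mem_enum.
Qed.

Lemma VfiltP i w :
  reflect (forall k : 'I_N, (k < N - i)%N -> w 0 k = 0) (w \in Vfilt K N i).
Proof.
apply: (iffP (monomial_spanP (fun k => N - i <= k)%N w)) => w_supp k.
  by move=> k_lt; apply: w_supp; rewrite -ltnNge.
by rewrite -ltnNge; apply: w_supp.
Qed.

Lemma Vfilt_full i : (N <= i)%N -> Vfilt K N i = fullv.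
Proof.
move=> N_le; apply/eqP; rewrite eqEsubv subvf; apply/subvP => w _.
by apply/VfiltP => k; rewrite (eqnP N_le).
Qed.

Lemma Vfilt0 : Vfilt K N 0 = 0%VS.
Proof.
apply/eqP; rewrite -subv0; apply/subvP => w /VfiltP w0; rewrite memv0.
by apply/eqP/rowP => k; rewrite w0 ?mxE // subn0.
Qed.

Lemma Vfilt_mono i j : (i <= j)%N -> (Vfilt K N i <= Vfilt K N j)%VS.
Proof.
move=> ij; apply/subvP => w /VfiltP w_low; apply/VfiltP => k k_lt.
by apply: w_low; apply: leq_trans k_lt _; apply: leq_sub2l.
Qed.

Lemma Vfilt_succ_notin i (k : 'I_N) w : (k + i.+1)%N = N -> w \in Vfilt K N i.+1 ->
  (w \in Vfilt K N i) = (w 0 k == 0).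
Proof.
move=> k_i /VfiltP w_low; apply/VfiltP/eqP => [w_low' | wk0 l l_lt].
  by apply: w_low'; lia.
have [l_lt_k|k_le] := ltnP l k; first by apply: w_low; lia.
by have -> : l = k by apply: val_inj => /=; lia.
Qed.

Lemma dim_Vfilt_succ i : (\dim (Vfilt K N i.+1) <= (\dim (Vfilt K N i)).+1)%N.
Proof.
have [i_lt | N_le] := ltnP i N; last by rewrite !Vfilt_full // (leq_trans N_le).
have k_lt : (N - i.+1 < N)%N by lia.
pose k := Ordinal k_lt; have k_i : (k + i.+1)%N = N by rewrite /= subnK.
have tpow_in : tpow K k \in Vfilt K N i.+1.
  apply/VfiltP => l l_lt; rewrite tpowE; case: eqP => // lk.
  by move: l_lt; rewrite lk ltnn.
have sub : (Vfilt K N i.+1 <= Vfilt K N i + <[tpow K k]>)%VS.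
  apply/subvP => w w_in; rewrite -(subrK (w 0 k *: tpow K k) w).
  apply: memv_add; last exact/memvZ/memv_line.
  by rewrite (Vfilt_succ_notin k_i) ?memvB ?memvZ // !mxE !eqxx mulr1 subrr.
apply: leq_trans (dimvS sub) (leq_trans (dimv_add_leqif _ _).1 _).
by rewrite dim_vline; case: (_ != 0) => /=; lia.
Qed.

Definition filt_dim W i := \dim (W :&: Vfilt K N i).

(* [jump W i] holds iff W has an element of t-adic order exactly N - 1 - i. *)
Definition jump W i := (filt_dim W i < filt_dim W i.+1)%N.

Lemma jumpP W i : reflect
  (exists w, [/\ w \in W, w \in Vfilt K N i.+1 & w \notin Vfilt K N i]) (jump W i).
Proof.
have sub := capvS (subvv W) (Vfilt_mono (leqnSn i)).
rewrite /jump /filt_dim (ltn_leqif (dimv_leqif_sup sub)).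
apply: (iffP idP) => [/subvPn [w] | [w [w_W w_in w_notin]]].
  by rewrite !memv_cap => /andP [w_W w_in] /nandP [/negP // | w_notin]; exists w.
by apply/subvPn; exists w; rewrite !memv_cap ?w_W ?w_in // (negbTE w_notin).
Qed.

Lemma filt_dim_succ W i : filt_dim W i.+1 = (filt_dim W i + jump W i)%N.
Proof.
have := dimv_capS_sub W (Vfilt_mono (leqnSn i)); have := dim_Vfilt_succ i.
have := dimvS (capvS (subvv W) (Vfilt_mono (leqnSn i))).
by rewrite /jump /filt_dim; case: ltnP => /=; lia.
Qed.

Lemma filt_dim_sum W i : filt_dim W i = (\sum_(0 <= k < i) jump W k)%N.
Proof.
elim: i => [|i IH]; first by rewrite big_geq // /filt_dim Vfilt0 capv0 dimv0.
by rewrite big_nat_recr //= filt_dim_succ IH.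
Qed.

Lemma filt_dim_full W : filt_dim W N = \dim W.
Proof. by rewrite /filt_dim Vfilt_full // capvf. Qed.

Definition Delta_of (J : pred nat) d : Prop := (N <= d)%N \/ (d < N /\ J (N - d - 1))%N.

Lemma DeltaW_jump W d : DeltaW W d <-> Delta_of (jump W) d.
Proof.
rewrite /DeltaW /Delta_of; split=> -[N_le | [d_lt w_jump]]; try by left.
  by right; split=> //; apply/jumpP; rewrite (_ : (N - d - 1).+1 = N - d)%N //; lia.
by right; split=> //; move/jumpP: w_jump; rewrite (_ : (N - d - 1).+1 = N - d)%N //; lia.
Qed.

Lemma DeltaW_eqP W (J : pred nat) :
  (forall d, DeltaW W d <-> Delta_of J d) <-> (forall i, (i < N)%N -> jump W i = J i).
Proof.
split=> [eq_Delta i i_lt | eq_jump d]; last first.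
  rewrite DeltaW_jump /Delta_of; split=> -[N_le | [d_lt J_d]]; try by left.
    by right; rewrite -eq_jump; [split | lia].
  by right; rewrite eq_jump; [split | lia].
have := eq_Delta (N - i.+1)%N; rewrite DeltaW_jump /Delta_of.
rewrite (_ : N - (N - i.+1) - 1 = i)%N; last lia.
have d_lt : (N - i.+1 < N)%N by lia.
move=> [jump_J J_jump]; apply/idP/idP => [w_jump | J_i].
  by case: (jump_J (or_intror (conj d_lt w_jump))) => [|[]] //; lia.
by case: (J_jump (or_intror (conj d_lt J_i))) => [|[]] //; lia.
Qed.

Lemma coefV_ltn w j (j_lt : (j < N)%N) : coefV w j = w 0 (Ordinal j_lt).
Proof.
rewrite /coefV; case: ltnP => [j_lt' | ]; last by rewrite leqNgt j_lt.
by congr (w 0 _); apply: val_inj.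
Qed.

Definition series_tpow (q : nat) : nat -> K := fun k => (k == q)%:R.

Lemma actV_series_tpow q w (k : 'I_N) :
  actV (series_tpow q) w 0 k = if (q <= k)%N then coefV w (k - q) else 0.
Proof.
rewrite mxE; case: leqP => [q_le | k_lt].
  rewrite (bigD1 (Ordinal (q_le : q < k.+1)%N)) //= big1 ?addr0 /series_tpow ?eqxx ?mul1r //.
  by move=> i /eqP i_q; case: eqP => [iq|]; [case: i_q; apply: val_inj | rewrite mul0r].
apply: big1 => i _; rewrite /series_tpow; case: eqP => [iq|]; last by rewrite mul0r.
by have := ltn_ord i; lia.
Qed.

Lemma jump_tpow_shift W q i : (forall w, w \in W -> actV (series_tpow q) w \in W) ->
  (q <= i)%N -> jump W i -> jump W (i - q).
Proof.
move=> W_inv q_le /jumpP [w [w_W w_in w_notin]].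
have i_lt : (i < N)%N.
  by rewrite ltnNge; apply: contra w_notin => /Vfilt_full ->; rewrite memvf.
have k_lt : (N - i.+1 < N)%N by lia.
have k'_lt : (N - (i - q).+1 < N)%N by lia.
have shifted : actV (series_tpow q) w \in Vfilt K N (i - q).+1.
  apply/VfiltP => l l_lt; rewrite actV_series_tpow; case: leqP => // q_l.
  have l_lt' : (l - q < N)%N by lia.
  by rewrite (coefV_ltn _ l_lt'); move/VfiltP: w_in; apply => /=; lia.
apply/jumpP; exists (actV (series_tpow q) w); split=> //; first exact: W_inv.
have l_lt : (N - (i - q).+1 - q < N)%N by lia.
rewrite (@Vfilt_succ_notin _ (Ordinal k'_lt)) /= ?subnK //; last by lia.
rewrite actV_series_tpow ifT /=; last by lia.
rewrite (coefV_ltn _ l_lt) (_ : Ordinal l_lt = Ordinal k_lt); last first.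
  by apply: val_inj => /=; lia.
by rewrite -(@Vfilt_succ_notin i (Ordinal k_lt)) /= ?subnK.
Qed.

Lemma jump_monomial_span S i : (i < N)%N -> jump (monomial_span S) i = S (N - i.+1)%N.
Proof.
move=> i_lt; have k_lt : (N - i.+1 < N)%N by lia.
pose k := Ordinal k_lt; have k_i : (k + i.+1)%N = N by rewrite /= subnK.
have tpow_in : tpow K k \in Vfilt K N i.+1.
  apply/VfiltP => l l_lt; rewrite tpowE; case: eqP => // lk.
  by move: l_lt; rewrite lk ltnn.
apply/jumpP/idP => [[w [/monomial_spanP w_supp w_in]] | Sk].
  by rewrite (Vfilt_succ_notin k_i w_in); apply: contraR => /(w_supp k) ->.
exists (tpow K k); split=> //; last by rewrite (Vfilt_succ_notin k_i) // tpowE eqxx oner_eq0.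
by apply/monomial_spanP => l Sl; rewrite tpowE; case: eqP Sl => // ->; rewrite Sk.
Qed.

Lemma actV_monomial_span S (f : nat -> K) :
  (forall i k, (i <= k < N)%N -> f i != 0 -> S (k - i)%N -> S k) ->
  {in monomial_span S, forall w, actV f w \in monomial_span S}.
Proof.
move=> S_closed w /monomial_spanP w_supp; apply/monomial_spanP => k Sk.
rewrite mxE big1 // => i _; have [-> | f_nz] := eqVneq (f i) 0; first by rewrite mul0r.
have i_le : (i <= k)%N by rewrite -ltnS.
have ki_lt : (k - i < N)%N by have := ltn_ord k; lia.
rewrite (coefV_ltn _ ki_lt) w_supp ?mulr0 //=; apply: contra Sk.
by apply: S_closed f_nz; rewrite i_le ltn_ord.
Qed.

Definition beta_span p := monomial_span (fun k => (N - k.+1)%N \in betas p).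

Lemma jump_beta_span p i : (i < N)%N -> jump (beta_span p) i = (i \in betas p).
Proof.
by move=> i_lt; rewrite jump_monomial_span // (_ : N - (N - i.+1).+1 = i)%N //; lia.
Qed.

Lemma dim_beta_span p : sorted leq p -> {in betas p, forall x, x < N}%N ->
  \dim (beta_span p) = size p.
Proof.
move=> p_sorted betas_lt; rewrite -filt_dim_full filt_dim_sum.
under eq_big_nat => i /andP [_ i_lt] do rewrite jump_beta_span //.
by rewrite sum_mem_uniq ?betas_uniq // (eq_in_count betas_lt) count_predT size_betas.
Qed.

Lemma beta_span_invariant m n p : sorted leq p -> (0 < m)%N -> (0 < n)%N ->
  is_core m p -> is_core n p ->
  forall f, in_R m n f -> {in beta_span p, forall w, actV f w \in beta_span p}.
Proof.
move=> p_sorted m_gt0 n_gt0 /(coreP p_sorted m_gt0) core_m /(coreP p_sorted n_gt0) core_n.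
move=> f f_R; apply: actV_monomial_span => i k /andP [i_le k_lt] /eqP /f_R [a [b i_ab]].
move=> /(@subn_closed_semigroup (fun x => x \in betas p) m n core_m core_n a b).
by rewrite -i_ab (_ : N - (k - i).+1 - i = N - k.+1)%N; [apply; lia | lia].
Qed.

Lemma in_R_series_tpow m n q : (exists a b, q = a * n + b * m)%N -> in_R m n (series_tpow q).
Proof. by move=> q_R k; rewrite /series_tpow; case: eqP => // ->. Qed.

Lemma series_tpow_invariant_core W p q :
  sorted leq p -> (0 < q)%N -> {in betas p, forall x, x < N}%N ->
  (forall i, (i < N)%N -> jump W i = (i \in betas p)) ->
  (forall w, w \in W -> actV (series_tpow q) w \in W) -> is_core q p.
Proof.
move=> p_sorted q_gt0 betas_lt W_jump W_inv; apply/coreP => // x x_in q_le.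
have x_lt := betas_lt x x_in.
by rewrite -W_jump; [apply: jump_tpow_shift; rewrite ?W_jump | lia].
Qed.
End Filtration.

Lemma schubertP (K : fieldType) d p (W : {vspace 'rV[K]_(2 * d)}) : young_in_square d p ->
  in_schubert p W <-> \dim W = d /\ (forall i, (i < 2 * d)%N -> jump W i = (i \in betas p)).
Proof.
move=> [size_p [p_sorted _]].
have sums_eq i : \dim (W :&: Vfilt K (2 * d) i) = #|[set j : 'I_d | nth 0 p j + j.+1 <= i]|%N
    <-> (\sum_(0 <= k < i) jump W k = \sum_(0 <= k < i) (k \in betas p))%N.
  by rewrite -/(filt_dim W i) filt_dim_sum card_schubert // sum_mem_uniq ?betas_uniq.
rewrite -(eq_partial_sums (2 * d) (jump W) (fun k => k \in betas p)) /in_schubert.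
by split=> -[dim_W W_dims]; split=> // i i_le; apply/sums_eq/W_dims.
Qed.

Theorem mainTheorem4 (R : realType) (m n : nat) (p : seq nat) :
  (0 < m)%N -> (0 < n)%N -> coprime m n ->
  young_in_square (jdelta m n) p ->
  ((exists W : {vspace 'rV[complex R]_(2 * jdelta m n)},
      in_schubert p W /\ in_JF W)
   <-> (is_core m p /\ is_core n p)) /\
  (is_core m p -> is_core n p ->
   exists DP : nat -> Prop,
     (forall W : {vspace 'rV[complex R]_(2 * jdelta m n)},
        in_schubert p W -> forall d, DeltaW W d <-> DP d) /\
     (forall W : {vspace 'rV[complex R]_(2 * jdelta m n)},
        (in_schubert p W /\ in_JF W) <-> piontkowski_cell DP W)).
Proof.
move=> m_gt0 n_gt0 _ yp; have [size_p [p_sorted _]] := yp.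
have betas_lt := betas_ltn yp.
have tpow_in_R q : q = m \/ q = n -> in_R m n (series_tpow (complex R) q).
  by case=> ->; apply: in_R_series_tpow; [exists 0%N, 1%N | exists 1%N, 0%N]; lia.
split.
  split=> [[W [/(schubertP _ yp) [_ W_jump] [_ W_inv]]] | [core_m core_n]].
    by split; apply: (series_tpow_invariant_core p_sorted _ betas_lt W_jump) => // w;
      apply: W_inv; apply: tpow_in_R; [left | right].
  have dim_span := dim_beta_span (complex R) p_sorted betas_lt; rewrite size_p in dim_span.
  exists (beta_span _ _ p); split.
    by apply/(schubertP _ yp); split; last exact: jump_beta_span.
  by split; last exact: beta_span_invariant.
move=> core_m core_n; exists (Delta_of (2 * jdelta m n) (fun i => i \in betas p)); split.
  by move=> W /(schubertP _ yp) [_ W_jump]; apply/DeltaW_eqP.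
move=> W; rewrite /piontkowski_cell DeltaW_eqP (schubertP _ yp).
by split=> [[[dim_W W_jump] W_JF] | [[dim_W W_inv] W_jump]].
Qed.
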